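(* For all integers $n\ge 1$ and $k\ge 0$, the number of ordered (plane) trees with $n$ edges containing exactly $k$ nodes that are adjacent to a leaf equals \[\frac{1}{n+1}\binom{n+1}{2k+1}\binom{n+k}{k}.\] Consequently $C_n=\frac{1}{n+1}\sum_{k}\binom{n+1}{2k+1}\binom{n+k}{k}$.
   Context: In an ordered tree the vertices are partitioned into three classes: the root, the leaves (non-root vertices with no children), and the nodes (vertices that are neither the root nor a leaf). A node is adjacent to a leaf if at least one of its children is a leaf. $C_n$ denotes the $n$th Catalan number. *)

From Stdlib Require Import List.
From mathcomp Require Import all_boot.
Set Implicit Arguments. Unset Strict Implicit. Unset Printing Implicit Defensive.

Inductive otree : Type := ONode : list otree -> otree.

Definition children (t : otree) : seq otree := let: ONode ts := t in ts.

Definition no_children (t : otree) : bool := nilp (children t).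

Fixpoint edges (t : otree) : nat :=
  let: ONode ts := t in
  (fix go (l : seq otree) : nat :=
     match l with [::] => 0 | c :: l' => (edges c).+1 + go l' end) ts.

Fixpoint adj_count (t : otree) : nat :=
  let: ONode ts := t in
  has no_children ts +
  (fix go (l : seq otree) : nat :=
     match l with [::] => 0 | c :: l' => adj_count c + go l' end) ts.

(* number of NODES (non-root, non-leaf vertices) adjacent to a leaf:
   count over the subtrees of the root's children, so the root is excluded;
   a vertex with a leaf child is automatically not a leaf. *)
Definition nodes_adj_leaf (t : otree) : nat := sumn (map adj_count (children t)).

Definition catalan (n : nat) : nat := 'C(n.*2, n) %/ n.+1.

From HB Require Import structures.
From Stdlib Require Import List.
From mathcomp Require Import all_boot zify.
Set Implicit Arguments. Unset Strict Implicit. Unset Printing Implicit Defensive.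

(* A forest is a sequence of plane trees; let c(n, r, k) count the forests of
   r trees with n edges in all and k nodes adjacent to a leaf (roots are never
   counted).  A forest of r + 1 trees either starts with an isolated vertex, or
   its first root has a leaf as first child, which can be deleted without
   changing k; otherwise follow the leftmost path below the first root down to
   the first vertex whose first child is a leaf.  Deleting that leaf and that
   path from the first root splits the first tree into three trees (the first
   root with its other subtrees, the bottom vertex with its other subtrees, and
   a new root carrying the upper path vertices with their other subtrees),
   losing two edges and exactly one node adjacent to a leaf.  These bijections give
     c(n, r+1, k) = c(n, r, k) + c(n-1, r+1, k) + c(n-2, r+3, k-1),
   which (n + r) c(n, r, k) = r C(n+r, r+2k) C(n+r-1+k, k) satisfies; the total
   number N(n, r) of such forests satisfies (n + r) N(n, r) = r C(2n+r-1, n) in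
   the same way.  Take r = 1. *)

Definition leaf : otree := ONode [::].

Lemma ONode_children t : ONode (children t) = t.
Proof. by case: t. Qed.

Lemma no_childrenP t : reflect (t = leaf) (no_children t).
Proof. by case: t => -[|? ?]; constructor. Qed.

Definition otree_nested_ind (P : otree -> Prop)
    (IH : forall ts, List.Forall P ts -> P (ONode ts)) : forall t, P t :=
  fix F t := let: ONode ts := t in
    IH ts ((fix G ts : List.Forall P ts :=
              if ts is t :: ts' then List.Forall_cons t (F t) (G ts')
              else List.Forall_nil P) ts).

Fixpoint otree_encode (t : otree) : GenTree.tree unit :=
  let: ONode ts := t in GenTree.Node 0 (map otree_encode ts).

Fixpoint otree_decode (c : GenTree.tree unit) : otree :=
  if c is GenTree.Node _ cs then ONode (map otree_decode cs) else leaf.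

Lemma otree_encodeK : cancel otree_encode otree_decode.
Proof.
elim/otree_nested_ind => ts IH /=; congr ONode.
by elim: IH => //= t ts' -> _ ->.
Qed.

HB.instance Definition _ := Equality.copy otree (can_type otree_encodeK).

Lemma In_mem (T : eqType) (x : T) (s : seq T) : List.In x s <-> x \in s.
Proof.
elim: s => //= y s IH; rewrite in_cons.
by split=> [[->|/IH->]|/orP[/eqP->|/IH]]; rewrite ?eqxx ?orbT; auto.
Qed.

Lemma NoDup_uniq (T : eqType) (s : seq T) : List.NoDup s -> uniq s.
Proof. by elim=> //= x {}s x_notin_s _ ->; rewrite andbT; apply/negP => /In_mem. Qed.

Lemma edgesE t : edges t = sumn [seq (edges c).+1 | c <- children t].
Proof. by case: t => ts; elim: ts => //= c ts ->. Qed.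

Lemma adj_countE t :
  adj_count t = has no_children (children t) + nodes_adj_leaf t.
Proof. by case: t => ts /=; congr (_ + _); elim: ts => //= c ts ->. Qed.

Lemma edges_leaf : edges leaf = 0. Proof. by []. Qed.
Lemma adj_count_leaf : adj_count leaf = 0. Proof. by []. Qed.

Lemma edges_cons t ts : edges (ONode (t :: ts)) = (edges t).+1 + edges (ONode ts).
Proof. by []. Qed.

Lemma nodes_adj_leaf_cons t ts :
  nodes_adj_leaf (ONode (t :: ts)) = adj_count t + nodes_adj_leaf (ONode ts).
Proof. by []. Qed.

Arguments edges : simpl never.
Arguments adj_count : simpl never.

Lemma adj_count_le_edges t : adj_count t <= edges t.
Proof.
elim/otree_nested_ind: t => ts IH; rewrite adj_countE edgesE /nodes_adj_leaf /=.
elim: IH => //= t {}ts le_t _ le_ts.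
by case: (no_children t) le_ts => /=; lia.
Qed.

Lemma nodes_adj_leaf_le_edges t : nodes_adj_leaf t <= edges t.
Proof. by apply: leq_trans (adj_count_le_edges t); rewrite adj_countE leq_addl. Qed.

Fixpoint spine (ws : seq otree) (v : otree) : otree :=
  if ws is w :: ws' then ONode (spine ws' v :: children w)
  else ONode (leaf :: children v).

Fixpoint unspine (t : otree) : seq otree * otree :=
  if t is ONode (d :: ts) then
    if no_children d then ([::], ONode ts)
    else let: (ws, v) := unspine d in (ONode ts :: ws, v)
  else ([::], leaf).

Lemma no_children_spine ws v : no_children (spine ws v) = false.
Proof. by case: ws. Qed.

Lemma spineK ws v : unspine (spine ws v) = (ws, v).
Proof.
elim: ws => [|w ws IH] /=; first by rewrite ONode_children.
by rewrite no_children_spine IH ONode_children.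
Qed.

Lemma unspineK t : ~~ no_children t -> spine (unspine t).1 (unspine t).2 = t.
Proof.
elim/otree_nested_ind: t => -[//|d ts] IH _ /=; have IHd := List.Forall_inv IH.
have [/no_childrenP -> //|d_node] := boolP (no_children d).
by move: (IHd d_node); case: (unspine d) => ws v /= ->.
Qed.

Lemma edges_spine ws v : edges (spine ws v) = (edges v + edges (ONode ws)).+1.
Proof.
elim: ws => [|w ws IH] /=; rewrite edges_cons.
  by rewrite edges_leaf ONode_children addn0.
by rewrite IH edges_cons ONode_children; lia.
Qed.

Lemma adj_count_spine ws v :
  adj_count (spine ws v) = (nodes_adj_leaf v + nodes_adj_leaf (ONode ws)).+1.
Proof.
elim: ws => [|w ws IH] /=; rewrite adj_countE nodes_adj_leaf_cons /=.
  by rewrite adj_count_leaf ONode_children addn0.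
rewrite no_children_spine IH nodes_adj_leaf_cons [adj_count w]adj_countE.
by rewrite ONode_children; lia.
Qed.

Definition forest_edges (f : seq otree) : nat := sumn (map edges f).
Definition forest_nodes (f : seq otree) : nat := sumn (map nodes_adj_leaf f).

Definition grow_leaf (f : seq otree) : seq otree :=
  if f is t :: g then ONode (leaf :: children t) :: g else [::].

Definition graft (f : seq otree) : seq otree :=
  if f is [:: r, v, w & g] then ONode (spine (children w) v :: children r) :: g
  else [::].

(* Inverts [cons leaf], [grow_leaf] and [graft] on their images; the tag tells
   which of the three built the forest. *)
Definition decompose_forest (f : seq otree) : seq otree + (seq otree + seq otree) :=
  if f is ONode (d :: ts) :: g then
    if no_children d then inr (inl (ONode ts :: g))
    else inr (inr [:: ONode ts, (unspine d).2, ONode (unspine d).1 & g])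
  else inl (behead f).

Lemma forest_edges_grow_leaf f :
  f != [::] -> forest_edges (grow_leaf f) = (forest_edges f).+1.
Proof.
by case: f => // t g _; rewrite /forest_edges /= edges_cons edges_leaf ONode_children.
Qed.

Lemma forest_nodes_grow_leaf f : forest_nodes (grow_leaf f) = forest_nodes f.
Proof.
by case: f => // t g; rewrite /forest_nodes /= nodes_adj_leaf_cons adj_count_leaf ONode_children.
Qed.

Lemma forest_edges_graft f :
  2 < size f -> forest_edges (graft f) = (forest_edges f).+2.
Proof.
case: f => [|r [|v [|w g]]] // _; rewrite /forest_edges /= edges_cons.
by rewrite edges_spine !ONode_children; lia.
Qed.

Lemma forest_nodes_graft f :
  2 < size f -> forest_nodes (graft f) = (forest_nodes f).+1.
Proof.
case: f => [|r [|v [|w g]]] // _; rewrite /forest_nodes /= nodes_adj_leaf_cons.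
by rewrite adj_count_spine !ONode_children; lia.
Qed.

Lemma decompose_grow_leaf f : f != [::] -> decompose_forest (grow_leaf f) = inr (inl f).
Proof. by case: f => // t g _ /=; rewrite ONode_children. Qed.

Lemma decompose_graft f : 2 < size f -> decompose_forest (graft f) = inr (inr f).
Proof.
case: f => [|r [|v [|w g]]] // _ /=.
by rewrite no_children_spine spineK /= !ONode_children.
Qed.

Fixpoint forests (n : nat) : nat -> seq (seq otree) :=
  fix forests_n r :=
    if r is r'.+1 then
      [seq leaf :: f | f <- forests_n r'] ++
      map grow_leaf (if n is n'.+1 then forests n' r else [::]) ++
      map graft (if n is n'.+2 then forests n' r'.+3 else [::])
    else if n is 0 then [:: [::]] else [::].

Lemma forests0 n : forests n 0 = if n is 0 then [:: [::]] else [::].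
Proof. by case: n. Qed.

Lemma forestsS n r :
  forests n r.+1 =
    [seq leaf :: f | f <- forests n r] ++
    map grow_leaf (if n is n'.+1 then forests n' r.+1 else [::]) ++
    map graft (if n is n'.+2 then forests n' r.+3 else [::]).
Proof. by case: n => [|[|n]]. Qed.

Lemma mem_forests n r f :
  (f \in forests n r) = (size f == r) && (forest_edges f == n).
Proof.
elim/ltn_ind: n r f => n IHn; elim=> [|r IHr] f.
  by rewrite forests0; case: n {IHn} => [|n]; case: f.
rewrite forestsS !mem_cat; apply/idP/idP.
- case/or3P => /mapP[g]; first by rewrite IHr => + ->.
    case: n IHn {IHr} => // n IHn; rewrite IHn // => /andP[/eqP size_g /eqP <-] ->.
    by case: g size_g => // t g <-; rewrite forest_edges_grow_leaf //= !eqxx.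
  case: n IHn {IHr} => [|[|n]] // IHn; rewrite IHn // => /andP[/eqP size_g /eqP <-] ->.
  by case: g size_g => [|t [|v [|w g]]] // [<-]; rewrite forest_edges_graft //= !eqxx.
- case: f => // -[[|d ts]] g /andP[/eqP[size_g]] /eqP edges_f.
    apply/or3P/Or31/mapP; exists g => //.
    by rewrite IHr size_g -edges_f /forest_edges /= edges_leaf !eqxx.
  move: edges_f; have [/no_childrenP -> | /unspineK] := boolP (no_children d).
    rewrite -[_ :: g]/(grow_leaf (ONode ts :: g)) forest_edges_grow_leaf // => edges_f; subst n.
    by rewrite (map_f grow_leaf) ?orbT ?IHn //= size_g !eqxx.
  case: (unspine d) => ws v /= <-.
  rewrite -[_ :: g]/(graft [:: ONode ts, v, ONode ws & g]) forest_edges_graft //.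
  move=> edges_f; subst n.
  by rewrite (map_f graft) ?orbT ?IHn //= size_g !eqxx.
Qed.

Lemma uniq_map_inl_inr (A B : eqType) (s1 : seq A) (s2 : seq B) :
  uniq (map inl s1 ++ map inr s2) = uniq s1 && uniq s2.
Proof.
rewrite cat_uniq !map_inj_uniq //; [|exact: inr_inj|exact: inl_inj].
by rewrite has_map (@eq_has _ _ pred0) ?has_pred0 // => y; apply/mapP => -[].
Qed.

Lemma uniq_forest_parts fs gs hs :
  [::] \notin gs -> all (fun f => 2 < size f) hs ->
  uniq fs -> uniq gs -> uniq hs ->
  uniq ([seq leaf :: f | f <- fs] ++ map grow_leaf gs ++ map graft hs).
Proof.
move=> gs_ne hs_big fs_uniq gs_uniq hs_uniq; apply: (@map_uniq _ _ decompose_forest).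
have -> : map decompose_forest ([seq leaf :: f | f <- fs] ++ map grow_leaf gs ++ map graft hs)
          = map inl fs ++ map inr (map inl gs ++ map inr hs).
  rewrite !map_cat -!map_comp; congr (_ ++ _ ++ _); apply/eq_in_map => f f_in //=.
    by rewrite decompose_grow_leaf //; apply: contraNneq gs_ne => <-.
  by rewrite decompose_graft //; apply: (allP hs_big).
by rewrite !uniq_map_inl_inr fs_uniq gs_uniq hs_uniq.
Qed.

Lemma forests_uniq n r : uniq (forests n r).
Proof.
elim/ltn_ind: n r => n IHn; elim=> [|r IHr]; first by rewrite forests0; case: n {IHn}.
rewrite forestsS; apply: uniq_forest_parts => //.
- by case: n {IHn IHr} => // n; rewrite mem_forests.
- case: n {IHn IHr} => [|[|n]] //.
  by apply/allP => f; rewrite mem_forests => /andP[/eqP-> _].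
- by case: n IHn {IHr} => // n IHn; apply: IHn.
- by case: n IHn {IHr} => [|[|n]] // IHn; apply: IHn.
Qed.

Lemma mul_bin_left_add m j : j.+1 * 'C(m, j.+1) + j * 'C(m, j) = m * 'C(m, j).
Proof.
have [le_jm | lt_mj] := leqP j m; last by rewrite !bin_small ?muln0 // ltnW.
by rewrite mul_bin_left -mulnDl subnK.
Qed.

Lemma binS_if n k : 'C(n.+1, k) = 'C(n, k) + (if k is k'.+1 then 'C(n, k') else 0).
Proof. by case: k => [|k]; rewrite ?binS ?bin0. Qed.

(* Used with a = C(m, j), b = C(m, j+1), P = C(m-1+k, k), Q = C(m-1+k, k-1) and
   j = r + 2k; the hypotheses are the ratios of neighbouring binomials. *)
Lemma nforests_nodes_step_identity m r k a b P Q :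
  (r + k.*2) * a + (r + k.*2).+1 * b = m * a -> k * P = m * Q ->
  m * (r.+1 * (b + a) * (P + Q)) =
    m.+1 * (r * a * P + r.+1 * b * P) + m * (r.+3 * (b + a) * Q).
Proof. by move=> *; nia. Qed.

(* Used with x, y, z = C(N, n-1), C(N, n), C(N, n+1) and N = 2n + r. *)
Lemma nforests_step_identity n r x y z :
  n.+1 * z = (n + r) * y -> n * y = (n.+1 + r) * x ->
  (n.+1 + r) * (r.+1 * (z + y + (y + x))) =
    (n.+1 + r).+1 * (r * (z + y) + r.+1 * y) + (n.+1 + r) * (r.+3 * x).
Proof. by move=> *; lia. Qed.

Definition nforests n r : nat := size (forests n r).

Definition nforests_nodes n r k : nat :=
  count (fun f => forest_nodes f == k) (forests n r).

Lemma nforests0 n : nforests n 0 = (n == 0).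
Proof. by case: n. Qed.

Lemma nforests_nodes0 n k : nforests_nodes n 0 k = (n == 0) && (k == 0).
Proof. by case: n => //; rewrite /nforests_nodes /= addn0 eq_sym. Qed.

Lemma nforestsS n r :
  nforests n r.+1 = nforests n r + (if n is n'.+1 then nforests n' r.+1 else 0)
                    + (if n is n'.+2 then nforests n' r.+3 else 0).
Proof. by rewrite /nforests forestsS !size_cat !size_map addnA; case: n => [|[|n]]. Qed.

Lemma nforests_nodesS n r k :
  nforests_nodes n r.+1 k =
    nforests_nodes n r k + (if n is n'.+1 then nforests_nodes n' r.+1 k else 0)
    + (if (n, k) is (n'.+2, k'.+1) then nforests_nodes n' r.+3 k' else 0).
Proof.
rewrite /nforests_nodes forestsS !count_cat !count_map addnA; congr (_ + _ + _).
  by case: n => // n; apply: eq_count => f /=; rewrite forest_nodes_grow_leaf.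
case: n => [|[|n]] //=.
have graft_nodes f : f \in forests n r.+3 -> forest_nodes (graft f) = (forest_nodes f).+1.
  by rewrite mem_forests => /andP[/eqP size_f _]; rewrite forest_nodes_graft ?size_f.
case: k => [|k]; last by apply: eq_in_count => f /graft_nodes /= ->.
by rewrite (@eq_in_count _ _ pred0) ?count_pred0 // => f /graft_nodes /= ->.
Qed.

Lemma nforests_edgeless r : nforests 0 r = 1.
Proof. by elim: r => // r IHr; rewrite nforestsS IHr. Qed.

Lemma nforests_nodes_edgeless r k : nforests_nodes 0 r k = (k == 0).
Proof. by elim: r => [|r IHr]; rewrite ?nforests_nodesS ?IHr ?addn0 // nforests_nodes0. Qed.

Lemma closed_form_step m c0 c1 c2 e0 e1 e2 e : 0 < m ->
  m * c0 = e0 -> m * c1 = e1 -> m.+1 * c2 = e2 ->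
  m * e = m.+1 * (e0 + e1) + m * e2 -> m.+1 * (c0 + c1 + c2) = e.
Proof.
move=> m_gt0 <- <- <- closed_e; apply/eqP; rewrite -(eqn_pmul2l m_gt0) closed_e.
by apply/eqP; lia.
Qed.

Lemma nforests_nodes_closed n r k :
  (n + r) * nforests_nodes n r k = r * 'C(n + r, r + k.*2) * 'C((n + r).-1 + k, k).
Proof.
elim/ltn_ind: n r k => n IHn; elim=> [|r IHr] k.
  by rewrite nforests_nodes0; case: n {IHn} => [|n]; rewrite ?muln0.
case: n IHn IHr => [|n] IHn IHr.
  rewrite nforests_nodes_edgeless add0n; case: k => [|k] /=.
    by rewrite double0 !addn0 binn bin0 !muln1.
  by rewrite muln0 bin_small ?muln0 //; lia.
rewrite nforests_nodesS addnS /=.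
apply: (@closed_form_step _ _ _ _ _
  (r.+1 * 'C(n.+1 + r, (r + k.*2).+1) * 'C(n + r + k, k))
  (r.+3 * 'C((n.+1 + r).+1, (r + k.*2).+1) * if k is k'.+1 then 'C(n + r + k, k') else 0)
  _ _ (IHr k)) => //.
- by have := IHn n (ltnSn n) r.+1 k; rewrite addnS.
- case: n IHn {IHr} => [|n] IHn; case: k => [|k]; rewrite ?muln0 //.
    by rewrite bin_small ?muln0 //; lia.
  by have := IHn n (ltnW (ltnSn _)) r.+3 k; rewrite doubleS !addnS.
have Pascal_j : 'C((n.+1 + r).+1, r.+1 + k.*2)
              = 'C(n.+1 + r, (r + k.*2).+1) + 'C(n.+1 + r, r + k.*2) := binS _ _.
rewrite {}Pascal_j -[(n.+1 + r).-1]/(n + r) (binS_if (n + r + k)).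
apply: (@nforests_nodes_step_identity _ _ k); first by rewrite addnC mul_bin_left_add.
case: k => [|k]; rewrite ?muln0 // mul_bin_left; congr (_ * _); lia.
Qed.

Lemma nforests_closed n r : (n + r) * nforests n r = r * 'C((n.*2 + r).-1, n).
Proof.
elim/ltn_ind: n r => n IHn; elim=> [|r IHr].
  by rewrite nforests0; case: n {IHn} => [|n]; rewrite ?muln0.
case: n IHn IHr => [|n] IHn IHr; first by rewrite nforests_edgeless bin0.
rewrite nforestsS addnS -[n.+1.*2 + r.+1]/((n.*2 + r.+1).+2) addnS /=.
apply: (@closed_form_step _ _ _ _ _ (r.+1 * 'C(n.*2 + r, n))
  (r.+3 * if n is n'.+1 then 'C(n.*2 + r, n') else 0) _ _ IHr) => //.
- by have := IHn n (ltnSn n) r.+1; rewrite !addnS.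
- case: n IHn {IHr} => [|n] IHn; first by rewrite !muln0.
  by have := IHn n (ltnW (ltnSn _)) r.+3; rewrite !addnS.
rewrite -[(n.+1.*2 + r).-1]/((n.*2 + r).+1) !binS binS_if; apply: nforests_step_identity.
  by rewrite mul_bin_left; congr (_ * _); lia.
by case: n {IHn IHr} => [|n]; rewrite ?muln0 // mul_bin_left; congr (_ * _); lia.
Qed.

Lemma sum_ord_eqn (x N : nat) : \sum_(k < N) (x == k :> nat) = (x < N).
Proof.
elim: N => [|N IH]; first by rewrite big_ord0.
by rewrite big_ord_recr /= IH [in RHS]ltnS [in RHS]leq_eqVlt; case: ltngtP.
Qed.

Lemma sum_count_eqn (T : Type) (g : T -> nat) (s : seq T) N :
  \sum_(k < N) count (fun x => g x == k) s = count (fun x => g x < N) s.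
Proof.
elim: s => [|x s IH] /=; first by rewrite big1.
by rewrite big_split /= IH sum_ord_eqn.
Qed.

Lemma count_trees n (s : seq otree) (p : pred (seq otree)) :
  uniq s -> (forall t, (t \in s) = (edges t == n)) ->
  count (fun t => p [:: t]) s = count p (forests n 1).
Proof.
move=> s_uniq mem_s; have singleton_inj : injective (fun t : otree => [:: t]).
  by move=> ? ? [].
rewrite -(count_map (fun t => [:: t])); move: p.
apply/permP/uniq_perm; rewrite ?forests_uniq ?map_inj_uniq //.
case=> [|t [|? ?]]; rewrite mem_forests //=; try by apply/mapP => -[].
by rewrite (mem_map singleton_inj) mem_s /forest_edges /= addn0.
Qed.

Theorem mainTheorem2 (n : nat) (s : seq otree) :
  (1 <= n)%N ->
  List.NoDup s ->
  (forall t : otree, List.In t s <-> edges t = n) ->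
  (forall k : nat,
     (n.+1 * count (fun t => nodes_adj_leaf t == k) s
      = 'C(n.+1, k.*2.+1) * 'C(n + k, k))%N)
  /\ (n.+1 * catalan n = \sum_(k < n.+1) 'C(n.+1, k.*2.+1) * 'C(n + k, k))%N.
Proof.
(* The identities hold for n = 0 as well. *)
move=> _ s_nodup s_trees.
have mem_s t : (t \in s) = (edges t == n).
  by apply/idP/eqP => [/In_mem/s_trees | /s_trees/In_mem].
have count_s k : count (fun t => nodes_adj_leaf t == k) s = nforests_nodes n 1 k.
  rewrite /nforests_nodes -(count_trees _ (NoDup_uniq s_nodup) mem_s).
  by apply: eq_count => t; rewrite /forest_nodes /= addn0.
have count_formula k : n.+1 * count (fun t => nodes_adj_leaf t == k) s
                      = 'C(n.+1, k.*2.+1) * 'C(n + k, k).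
  by rewrite count_s -addn1 nforests_nodes_closed mul1n addn1 add1n.
split=> //.
have catalanE : catalan n = nforests n 1.
  rewrite /catalan; have := nforests_closed n 1; rewrite !addn1 mul1n /= => <-.
  by rewrite mulKn.
under eq_bigr do rewrite -count_formula.
rewrite -big_distrr catalanE sum_count_eqn /nforests -count_predT.
congr (_ * _); rewrite -(count_trees _ (NoDup_uniq s_nodup) mem_s).
apply: eq_in_count => t; rewrite mem_s => /eqP edges_t.
by rewrite /= ltnS -edges_t nodes_adj_leaf_le_edges.
Qed.
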